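(* Let $S_1$ and $S_2$ be disjoint alphabets, let $A_1$ be a set of factorizations on $S_1$ and $A_2$ a set of factorizations on $S_2$, and let $w$ be a weight on $A_1 * A_2$ which is also a weight on $A_1$ and on $A_2$. Then, whenever the Laguerre series involved are well-defined, \[ f_{A_1*A_2,w}(t) = f_{A_1,w}(t)\cdot f_{A_2,w}(t). \]
   Context: A word on an alphabet $S$ is a finite sequence of letters of $S$; a subword is a consecutive block of letters. A factorization on $S$ is an ordered list $(\phi_1)\cdots(\phi_k)$ of nonempty words on $S$ (its parts); $\mathrm{parts}(\phi)=k$. The empty factorization (no parts) is written $\emptyset$. For $T\subseteq S$, the restriction $\phi|_T$ is the factorization whose parts are the maximal subwords of parts of $\phi$ using only letters of $T$, ordered by occurrence in $\phi$ ($\emptyset$ if there are none). For disjoint alphabets $S_1,S_2$ and sets $A_1,A_2$ of factorizations on them, $A_1*A_2$ is the set of factorizations $\phi$ on $S_1\cup S_2$ with $\phi|_{S_1}\in A_1$ and $\phi|_{S_2}\in A_2$. A weight on a set $A$ of factorizations on $S$ is a function $w$ from $A$ and all restrictions of elements of $A$ into a polynomial ring $\mathbb{R}[x_1,x_2,\ldots]$ with $w(\phi)=w(\phi|_T)\,w(\phi|_{S\setminus T})$ for all $\phi\in A$, $T\subseteq S$. The polynomials $l_k(t)$ are defined by $\sum_{k\ge0}l_k(t)x^k=e^{tx/(1+x)}$. The Laguerre series of $A$ with respect to $w$ is $f_{A,w}(t)=\sum_{\phi\in A}w(\phi)\,l_{\mathrm{parts}(\phi)}(t)$, when well-defined as a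 formal power series. *)

From HB Require Import structures.
From mathcomp Require Import all_boot all_order all_algebra.
From mathcomp Require Import mathcomp_extra boolp classical_sets functions.
From mathcomp Require Import cardinality fsbigop reals.
From mathcomp Require Import finmap multiset.

Set Implicit Arguments.
Unset Strict Implicit.
Unset Printing Implicit Defensive.
Import Order.TTheory GRing.Theory Num.Theory.
Local Open Scope classical_set_scope.
Local Open Scope ring_scope.

Definition is_fact_on (L : choiceType) (S : set L) (phi : seq (seq L)) : Prop :=
  (forall u, u \in phi -> u != [::]) /\
  (forall u, u \in phi -> forall a, a \in u -> S a).

(* [blocks T u]: the maximal (possibly empty) blocks of letters of T in u,
   separated by the letters of u not in T, in order. *)
Fixpoint blocks (L : choiceType) (T : set L) (u : seq L) : seq (seq L) :=
  match u with
  | [::] => [:: [::]]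
  | a :: u' =>
      let p := blocks T u' in
      if a \in T then (a :: head [::] p) :: behead p else [::] :: p
  end.

Definition runs (L : choiceType) (T : set L) (u : seq L) : seq (seq L) :=
  [seq v <- blocks T u | v != [::]].

Definition restr (L : choiceType) (T : set L) (phi : seq (seq L))
  : seq (seq L) := flatten [seq runs T u | u <- phi].

Definition parts (L : Type) (phi : seq (seq L)) : nat := size phi.

Definition fstar (L : choiceType) (S1 S2 : set L)
    (A1 A2 : set (seq (seq L))) : set (seq (seq L)) :=
  [set phi | is_fact_on (S1 `|` S2) phi /\ A1 (restr S1 phi)
                                        /\ A2 (restr S2 phi)].

(* A monomial in the countably many variables x_i (i : nat) is a finite
   multiset of variable indices; the product of monomials is multiset sum. *)
Definition mono := multiset nat.

(* an element of R[x_0, x_1, ...] or R[[x_0, x_1, ...]] is given by its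
   coefficient function; it is a polynomial iff its support is finite *)
Definition is_xpoly (R : realType) (p : mono -> R) : Prop :=
  finite_set [set m | p m != 0].

(* product (Cauchy product; each monomial has finitely many factorizations) *)
Definition xmul (R : realType) (p q : mono -> R) : mono -> R :=
  fun m => \sum_(ab \in [set ab : mono * mono | msetD ab.1 ab.2 = m])
             p ab.1 * q ab.2.

Definition is_weight (R : realType) (L : choiceType) (S : set L)
    (A : set (seq (seq L))) (w : seq (seq L) -> mono -> R) : Prop :=
  forall phi, A phi ->
    is_xpoly (w phi) /\
    forall T : set L, T `<=` S ->
      [/\ is_xpoly (w (restr T phi)), is_xpoly (w (restr (S `\` T) phi)) &
          w phi = xmul (w (restr T phi)) (w (restr (S `\` T) phi))].

(* sum_k l_k(t) x^k = e^{t x/(1+x)} = sum_n t^n (x/(1+x))^n / n!, hence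
   [t^n] l_k = [x^k] (x/(1+x))^n / n!.  Modulo x^(k+1), x/(1+x) agrees with
   its truncation xg k = sum_{1<=i<=k} (-1)^(i-1) x^i, and [t^n] l_k = 0 for
   n > k (as (x/(1+x))^n has valuation n). *)
Definition xg (R : realType) (k : nat) : {poly R} :=
  \sum_(1 <= i < k.+1) ((-1) ^+ i.+1) *: 'X^i.

Definition laguerre (R : realType) (k : nat) : {poly R} :=
  \poly_(n < k.+1) (((xg R k) ^+ n)`_k / (n`!)%:R).

(* a power series in t and the x_i: coefficient of t^j x^m is  f j m *)

Definition lag_term (R : realType) (L : choiceType)
    (w : seq (seq L) -> mono -> R) (phi : seq (seq L)) : nat -> mono -> R :=
  fun j m => w phi m * (laguerre R (parts phi))`_j.

Definition lag_wd (R : realType) (L : choiceType) (A : set (seq (seq L)))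
    (w : seq (seq L) -> mono -> R) : Prop :=
  forall j m, finite_set (A `&` [set phi | lag_term w phi j m != 0]).

(* f_{A,w}(t) (meaningful when lag_wd A w) *)
Definition lag_series (R : realType) (L : choiceType) (A : set (seq (seq L)))
    (w : seq (seq L) -> mono -> R) : nat -> mono -> R :=
  fun j m => \sum_(phi \in A) lag_term w phi j m.

Definition smul (R : realType) (f g : nat -> mono -> R) : nat -> mono -> R :=
  fun j m => \sum_(i < j.+1)
     \sum_(ab \in [set ab : mono * mono | msetD ab.1 ab.2 = m])
        f i ab.1 * g (j - i)%N ab.2.

(* The map phi |-> (phi|_S1, phi|_S2) sends A1 * A2 into A1 x A2, and its fibre
   over (p1, p2) consists of the shuffles of p1 and p2: interleave the parts of
   p1 and p2, then glue some consecutive parts coming from different alphabets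
   into single parts.  The weight is constant on a fibre, w(phi) = w(p1) w(p2),
   so the theorem reduces to the polynomial identity
     sum_(phi in shuffle p1 p2) l_(parts phi) = l_(parts p1) * l_(parts p2).
   Splitting the shuffles according to the alphabet of their first letter, this
   follows by induction from l_k(0) = [k = 0] and the recurrence
   l_(k+1)' = l_k - l_k', which expresses (1 + x) dF/dt = x F for the generating
   function F = e^(tx/(1+x)). *)

From HB Require Import structures.
From mathcomp Require Import all_boot all_order all_algebra.
From mathcomp Require Import mathcomp_extra boolp classical_sets functions.
From mathcomp Require Import cardinality fsbigop reals.
From mathcomp Require Import finmap multiset.
From mathcomp Require Import ring.

Set Implicit Arguments.
Unset Strict Implicit.
Unset Printing Implicit Defensive.
Import Order.TTheory GRing.Theory Num.Theory.
Local Open Scope classical_set_scope.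
Local Open Scope ring_scope.

Section CoefAgree.
Variable R : comNzRingType.
Implicit Types (p q s : {poly R}) (n : nat).

Lemma coefMl_agree n p q s : (forall i, (i <= n)%N -> p`_i = q`_i) ->
  forall i, (i <= n)%N -> (p * s)`_i = (q * s)`_i.
Proof.
move=> pq i le_in; rewrite !coefM; apply: eq_bigr => k _; rewrite pq //.
by rewrite -ltnS (leq_trans (ltn_ord k)).
Qed.

Lemma coefX_agree n p q k : (forall i, (i <= n)%N -> p`_i = q`_i) ->
  forall i, (i <= n)%N -> (p ^+ k)`_i = (q ^+ k)`_i.
Proof.
move=> pq; elim: k => [|k IH] i le_in //.
by rewrite !exprS (coefMl_agree _ pq) // mulrC [q * _]mulrC (coefMl_agree _ IH).
Qed.

End CoefAgree.

Section Laguerre.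
Variable R : realType.
Implicit Types (p q s : {poly R}) (n r : nat).

Lemma xg0 : xg R 0 = 0.
Proof. by rewrite /xg big_geq. Qed.

Lemma xgS n : xg R n.+1 = xg R n + (-1) ^+ n.+2 *: 'X^(n.+1).
Proof. by rewrite /xg big_nat_recr. Qed.

(* Truncation of the identity x/(1+x) = x (1 - x/(1+x)). *)
Lemma xgSE n : xg R n.+1 = 'X * (1 - xg R n).
Proof.
elim: n => [|n IH].
  by rewrite xgS xg0 add0r subr0 mulr1 expr2 mulrNN mulr1 scale1r.
rewrite xgS [in RHS]xgS opprD addrA mulrDr -IH mulrN -scalerAr -exprS.
by rewrite [in RHS]exprS mulN1r scaleNr opprK (exprS _ n.+2) exprS !mulN1r opprK.
Qed.

Lemma coef_xgS n i : (i <= n)%N -> (xg R n.+1)`_i = (xg R n)`_i.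
Proof. by move=> le_in; rewrite xgS coefD coefZ coefXn ltn_eqF ?mulr0 ?addr0. Qed.

Definition lag_coef n r : R := ((xg R n) ^+ r)`_n.

Lemma lag_coef0 r : lag_coef 0 r = (r == 0)%:R.
Proof. by rewrite /lag_coef xg0; case: r => [|r]; rewrite ?coef1 // expr0n coef0. Qed.

Lemma lag_coefS0 n : lag_coef n.+1 0 = 0.
Proof. by rewrite /lag_coef coef1. Qed.

Lemma lag_coefSS n r : lag_coef n.+1 r.+1 = lag_coef n r - lag_coef n r.+1.
Proof.
have xgSn := @coef_xgS n.
rewrite /lag_coef exprSr {2}xgSE mulrCA coefXM /= mulrBr mulr1 coefB.
rewrite (coefX_agree _ xgSn) //; congr (_ - _).
by rewrite mulrC -(coefMl_agree _ xgSn) // -exprS (coefX_agree _ xgSn).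
Qed.

Lemma lag_coef_gt n r : (n < r)%N -> lag_coef n r = 0.
Proof.
elim: n r => [|n IH] [|r] //; first by rewrite lag_coef0.
by rewrite ltnS => lt_nr; rewrite lag_coefSS !IH ?subrr // ltnW.
Qed.

Lemma coef_laguerre n r : (laguerre R n)`_r = lag_coef n r / r`!%:R.
Proof. by rewrite coef_poly; case: ltnP => // le_n; rewrite lag_coef_gt ?mul0r. Qed.

Lemma coef0_laguerre n : (laguerre R n)`_0 = (n == 0)%:R.
Proof. by case: n => [|n]; rewrite coef_laguerre ?lag_coef0 ?lag_coefS0 divr1. Qed.

Lemma laguerre0 : laguerre R 0 = 1.
Proof.
by apply/polyP => -[|r]; rewrite coef_laguerre lag_coef0 coef1 /= ?divr1 ?mul0r.
Qed.

Lemma deriv_laguerreS n :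
  (laguerre R n.+1)^`() = laguerre R n - (laguerre R n)^`().
Proof.
apply/polyP => r; rewrite coefB !coef_deriv !coef_laguerre lag_coefSS.
have fact_neq0 k : k`!%:R != 0 :> R by rewrite pnatr_eq0 -lt0n fact_gt0.
rewrite factS natrM; field.
by rewrite fact_neq0 nat1r pnatr_eq0.
Qed.

Lemma deriv_inj p q : p^`() = q^`() -> p`_0 = q`_0 -> p = q.
Proof.
move=> dpq pq0; apply/polyP => -[//|i].
have /eqP := congr1 (fun s => s`_i) dpq.
by rewrite !coef_deriv eqr_pMn2r // => /eqP.
Qed.

End Laguerre.

Section Shuffles.
Variable L : choiceType.
Notation fact := (seq (seq L)).
Implicit Types (a b : seq L) (psi : fact).

Definition glue a psi : fact := if psi is u :: psi' then (a ++ u) :: psi' else [::].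

(* [shuffle1 p1 p2] (resp. [shuffle2 p1 p2]) lists the factorizations with
   restrictions p1 and p2 whose first letter comes from p1 (resp. p2), see
   [mem_shuffle]: the first part a of p1 is either a part on its own or glued in
   front of a factorization starting with p2. *)
Fixpoint shuffles (p1 p2 : fact) {struct p1} : seq fact * seq fact :=
  match p1 with
  | [::] => ([::], if p2 is [::] then [::] else [:: p2])
  | a :: p1' =>
    let fix shuffles_cons p2 :=
      let s := shuffles p1' p2 in
      let s1 := map (cons a) (if nilp p1' && nilp p2 then [:: [::]] else s.1 ++ s.2)
                ++ map (glue a) s.2 in
      if p2 is b :: p2' then
        let t := shuffles_cons p2' in
        (s1, map (cons b) (t.1 ++ t.2) ++ map (glue b) t.1)
      else (s1, [::])
    in shuffles_cons p2
  end.

Definition shuffle1 (p1 p2 : fact) := (shuffles p1 p2).1.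
Definition shuffle2 (p1 p2 : fact) := (shuffles p1 p2).2.
Definition shuffle (p1 p2 : fact) :=
  if nilp p1 && nilp p2 then [:: [::]] else shuffle1 p1 p2 ++ shuffle2 p1 p2.

Lemma shuffle1_nil (p2 : fact) : shuffle1 [::] p2 = [::].
Proof. by []. Qed.

Lemma shuffle2_nil (p1 : fact) : shuffle2 p1 [::] = [::].
Proof. by case: p1. Qed.

Lemma shuffle1_cons a (p1 p2 : fact) :
  shuffle1 (a :: p1) p2 = map (cons a) (shuffle p1 p2) ++ map (glue a) (shuffle2 p1 p2).
Proof. by case: p2. Qed.

Lemma shuffle2_cons (p1 : fact) b (p2 : fact) :
  shuffle2 p1 (b :: p2) = map (cons b) (shuffle p1 p2) ++ map (glue b) (shuffle1 p1 p2).
Proof. by case: p1 => [|a p1]; case: p2. Qed.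

Lemma size_glue a psi : size (glue a psi) = size psi.
Proof. by case: psi. Qed.

End Shuffles.

Section ShuffleLaguerre.
Variables (R : realType) (L : choiceType).
Notation fact := (seq (seq L)).
Implicit Types (a : seq L) (s : seq fact).

Definition laguerre_sum s : {poly R} := \sum_(phi <- s) laguerre R (size phi).

Lemma laguerre_sum_cat s s' :
  laguerre_sum (s ++ s') = laguerre_sum s + laguerre_sum s'.
Proof. exact: big_cat. Qed.

Lemma laguerre_sum_glue a s : laguerre_sum (map (glue a) s) = laguerre_sum s.
Proof. by rewrite /laguerre_sum big_map; under eq_bigr do rewrite size_glue. Qed.

Lemma laguerre_sum_cons a s :
  (laguerre_sum (map (cons a) s))^`() = laguerre_sum s - (laguerre_sum s)^`() /\
  (laguerre_sum (map (cons a) s))`_0 = 0.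
Proof.
rewrite /laguerre_sum big_map; split.
  rewrite [LHS]raddf_sum [in RHS]raddf_sum -sumrB.
  by apply: eq_bigr => phi _; rewrite /= deriv_laguerreS.
by rewrite coef_sum big1 // => phi _; rewrite coef0_laguerre.
Qed.

Lemma laguerre_sum_shuffles (p1 p2 : fact) :
  [/\ laguerre_sum (shuffle p1 p2) = laguerre R (size p1) * laguerre R (size p2),
      (laguerre_sum (shuffle1 p1 p2))^`() =
         (laguerre R (size p1))^`() * laguerre R (size p2),
      (laguerre_sum (shuffle1 p1 p2))`_0 = 0,
      (laguerre_sum (shuffle2 p1 p2))^`() =
         laguerre R (size p1) * (laguerre R (size p2))^`() &
      (laguerre_sum (shuffle2 p1 p2))`_0 = 0].
Proof.
elim: p1 p2 => [|a p1 IH1] p2.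
  rewrite /= laguerre0 derivC !mul1r mul0r /laguerre_sum.
  case: p2 => [|b p2] /=; rewrite !big_nil deriv0 coef0 ?big_seq1 ?laguerre0.
    by rewrite derivC.
  by rewrite coef0_laguerre.
set l1 := laguerre R (size (a :: p1)).
have sum_shuffle1 p2' :
    (laguerre_sum (shuffle1 (a :: p1) p2'))^`() = l1^`() * laguerre R (size p2') /\
    (laguerre_sum (shuffle1 (a :: p1) p2'))`_0 = 0.
  have [P _ _ d2 c2] := IH1 p2'; have [dc cc] := laguerre_sum_cons a (shuffle p1 p2').
  rewrite shuffle1_cons laguerre_sum_cat laguerre_sum_glue derivD coefD dc d2 P cc c2.
  by rewrite addr0 /l1 /= deriv_laguerreS derivM; split=> //; ring.
have sum_shuffle p2' :
    (laguerre_sum (shuffle2 (a :: p1) p2'))^`() = l1 * (laguerre R (size p2'))^`() ->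
    (laguerre_sum (shuffle2 (a :: p1) p2'))`_0 = 0 ->
    laguerre_sum (shuffle (a :: p1) p2') = l1 * laguerre R (size p2').
  have [d1 c1] := sum_shuffle1 p2'; move=> d2 c2.
  apply: deriv_inj; rewrite /shuffle /= laguerre_sum_cat.
    by rewrite derivD d1 d2 derivM.
  by rewrite coefD c1 c2 coef0M /l1 !coef0_laguerre /= mul0r addr0.
elim: p2 => [|b p2 [P d1 c1 _ _]].
  have d2 : (laguerre_sum (shuffle2 (a :: p1) [::]))^`() =
      l1 * (laguerre R (size [::]))^`().
    by rewrite shuffle2_nil /laguerre_sum big_nil deriv0 /= laguerre0 derivC mulr0.
  have c2 : (laguerre_sum (shuffle2 (a :: p1) [::]))`_0 = 0.
    by rewrite shuffle2_nil /laguerre_sum big_nil coef0.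
  have [d1 c1] := sum_shuffle1 [::].
  by split=> //; apply: sum_shuffle.
have [dc cc] := laguerre_sum_cons b (shuffle (a :: p1) p2).
have d2 : (laguerre_sum (shuffle2 (a :: p1) (b :: p2)))^`() =
    l1 * (laguerre R (size (b :: p2)))^`().
  rewrite shuffle2_cons laguerre_sum_cat laguerre_sum_glue derivD dc d1 P.
  by rewrite /= deriv_laguerreS derivM; ring.
have c2 : (laguerre_sum (shuffle2 (a :: p1) (b :: p2)))`_0 = 0.
  by rewrite shuffle2_cons laguerre_sum_cat laguerre_sum_glue coefD cc c1 addr0.
have [d1' c1'] := sum_shuffle1 (b :: p2).
by split=> //; apply: sum_shuffle.
Qed.

Lemma laguerre_sum_shuffle (p1 p2 : fact) :
  laguerre_sum (shuffle p1 p2) = laguerre R (size p1) * laguerre R (size p2).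
Proof. by have [] := laguerre_sum_shuffles p1 p2. Qed.

End ShuffleLaguerre.

Section Restriction.
Variable L : choiceType.
Notation fact := (seq (seq L)).
Implicit Types (T : set L) (a u w : seq L) (phi psi : fact).

Lemma blocksE T u : blocks T u = head [::] (blocks T u) :: behead (blocks T u).
Proof. by case: u => [|x u] //=; case: ifP. Qed.

Lemma blocks_cat_in T a w : {in a, forall x, x \in T} ->
  blocks T (a ++ w) = (a ++ head [::] (blocks T w)) :: behead (blocks T w).
Proof.
elim: a => [|x a IH] aT /=; first exact: blocksE.
by rewrite aT ?mem_head // IH // => y ya; apply: aT; rewrite in_cons ya orbT.
Qed.

Lemma runs_cat_out T a w : {in a, forall x, x \notin T} ->
  runs T (a ++ w) = runs T w.
Proof.
elim: a => [|x a IH] aT //; rewrite /runs /= (negbTE (aT _ (mem_head _ _))) /=.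
by apply: IH => y ya; apply: aT; rewrite in_cons ya orbT.
Qed.

(* [~~ starts T [:: w]] says that the word w does not begin with a letter of T. *)
Definition starts T phi := if phi is (c :: _) :: _ then c \in T else false.

Lemma runs_cat_in T a w : a != [::] -> {in a, forall x, x \in T} ->
  ~~ starts T [:: w] -> runs T (a ++ w) = a :: runs T w.
Proof.
move=> a_neq0 aT wT; have blocks_w : head [::] (blocks T w) = [::].
  by case: w wT => [|d w] //= /negbTE ->.
by rewrite /runs blocks_cat_in // blocks_w cats0 /= a_neq0 [in RHS]blocksE blocks_w.
Qed.

Lemma split_run T u : exists a w, [/\ u = a ++ w, {in a, forall x, x \in T} &
  ~~ starts T [:: w]].
Proof.
elim: u => [|x u [a [w [-> aT wT]]]]; first by exists [::], [::].
have [xT|xT] := boolP (x \in T); last by exists [::], (x :: a ++ w).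
exists (x :: a), w; split=> // y; rewrite in_cons => /orP[/eqP->//|]; exact: aT.
Qed.

Section Disjoint.
Variables T T' : set L.
Hypothesis disjT : forall x, x \in T -> x \notin T'.

Lemma restr_cons a phi : a != [::] -> {in a, forall x, x \in T} ->
  restr T (a :: phi) = a :: restr T phi /\ restr T' (a :: phi) = restr T' phi.
Proof.
move=> a_neq0 aT; split; rewrite /restr /= -{1}[a]cats0.
  by rewrite runs_cat_in.
by rewrite runs_cat_out // => x /aT /disjT.
Qed.

Lemma restr_glue a psi : a != [::] -> {in a, forall x, x \in T} -> starts T' psi ->
  restr T (glue a psi) = a :: restr T psi /\ restr T' (glue a psi) = restr T' psi.
Proof.
case: psi => [|[|d w] psi] a_neq0 aT //= dT'; split; rewrite /restr /=.
  by rewrite runs_cat_in //=; apply/negP => /disjT; rewrite dT'.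
by rewrite runs_cat_out // => x /aT /disjT.
Qed.

End Disjoint.

Lemma is_fact_on_cons S u phi : is_fact_on S (u :: phi) <->
  [/\ u != [::], {in u, forall x, x \in S} & is_fact_on S phi].
Proof.
split=> [[u_neq0 uS]|[u_neq0 uS [phi_neq0 phiS]]].
  split; first exact/u_neq0/mem_head.
    by move=> x xu; apply/mem_set/(uS u) => //; rewrite mem_head.
  by split=> v vphi; [apply: u_neq0 | apply: uS]; rewrite in_cons vphi orbT.
split=> v; rewrite in_cons => /orP[/eqP-> //|vphi]; first exact: phi_neq0.
  by move=> x /uS /set_mem.
exact: phiS.
Qed.

Lemma is_fact_on_glue S a psi : {in a, forall x, x \in S} -> is_fact_on S psi ->
  is_fact_on S (glue a psi).
Proof.
case: psi => [//|u psi] aS /is_fact_on_cons[u_neq0 uS psiS].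
apply/is_fact_on_cons; split=> //.
  by rewrite -size_eq0 size_cat addn_eq0 !size_eq0 (negbTE u_neq0) andbF.
by move=> x; rewrite mem_cat => /orP[/aS|/uS].
Qed.

Section Step.
Variables T T' S : set L.
Hypotheses (disjT : forall x, x \in T -> x \notin T') (subTS : T `<=` S)
  (coverS : forall x, x \in S -> x \notin T -> x \in T').

Lemma mem_shuffle_step a F G q q' :
  a != [::] -> {in a, forall x, x \in T} ->
  (forall phi, phi \in F <->
     [/\ is_fact_on S phi, restr T phi = q & restr T' phi = q']) ->
  (forall psi, psi \in G <->
     [/\ is_fact_on S psi, restr T psi = q, restr T' psi = q' & starts T' psi]) ->
  forall phi, phi \in map (cons a) F ++ map (glue a) G <->
    [/\ is_fact_on S phi, restr T phi = a :: q, restr T' phi = q' & starts T phi].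
Proof.
move=> a_neq0 aT memF memG phi.
have aS : {in a, forall x, x \in S} by move=> x /aT /set_mem /subTS /mem_set.
have startsT u psi : starts T ((a ++ u) :: psi).
  by case: a a_neq0 aT {aS} => // x a _ /(_ x (mem_head _ _)).
rewrite mem_cat; split.
  case/orP=> [/mapP[phi' /memF[phiS r r'] ->]|/mapP[psi /memG[psiS r r' st] ->]].
    have [-> ->] := restr_cons disjT phi' a_neq0 aT.
    by rewrite r r'; split=> //; [exact/is_fact_on_cons | rewrite -(cats0 a)].
  have [-> ->] := restr_glue disjT a_neq0 aT st.
  rewrite r r'; split=> //; first exact: is_fact_on_glue.
  by case: psi st {r r' psiS} => [|u psi] // _; apply: startsT.
case: phi => [|u phi'] [phiS r r' st] //.
have /is_fact_on_cons[u_neq0 uS phi'S] := phiS.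
(* Cut the first part of phi after its maximal prefix a' of letters of T. *)
have [a' [w [Eu a'T wT]]] := split_run T u.
have a'_neq0 : a' != [::] by apply: contraTneq st => a'0; rewrite Eu a'0.
case: w Eu wT => [|d w] Eu wT; subst u.
  rewrite cats0 in r r'; have [ea ea'] := restr_cons disjT phi' a'_neq0 a'T.
  move: r r'; rewrite ea ea' => -[-> r] r'.
  by apply/orP; left; rewrite cats0; apply: map_f; apply/memF.
have dT' : d \in T' by apply: coverS wT; apply: uS; rewrite mem_cat mem_head orbT.
pose psi := (d :: w) :: phi'.
have psiS : is_fact_on S psi.
  by apply/is_fact_on_cons; split=> // x xw; apply: uS; rewrite mem_cat xw orbT.
have [ea ea'] := restr_glue disjT (psi := psi) a'_neq0 a'T dT'.
move: r r'; rewrite -/(glue a' psi) ea ea' => -[-> r] r'.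
by apply/orP; right; apply/mapP; exists psi => //; apply/memG.
Qed.

Lemma uniq_shuffle_step a F G : {in G, forall psi, starts T' psi} ->
  uniq F -> uniq G -> uniq (map (cons a) F ++ map (glue a) G).
Proof.
move=> startsG uF uG; rewrite cat_uniq map_inj_uniq ?uF; last by move=> ? ? [].
rewrite map_inj_in_uniq ?uG ?andbT; last first.
  move=> psi psi' /startsG + /startsG.
  case: psi => [|[|c u] psi] //; case: psi' => [|[|c' u'] psi'] // _ _ [] /eqP.
  by rewrite eqseq_cat // eqxx => /eqP [-> ->] ->.
apply/hasPn => _ /mapP[psi /startsG + ->]; case: psi => [|[|c u] psi] // _.
apply/mapP => -[phi _] [] /(congr1 size)/eqP.
by rewrite size_cat -{2}[size a]addn0 eqn_add2l.
Qed.

End Step.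

Lemma restr_starts T phi : starts T phi -> restr T phi != [::].
Proof. by case: phi => [|[|c u] phi] //= cT; rewrite /restr /= /runs /= cT. Qed.

Section Fiber.
Variables S1 S2 : set L.
Hypothesis disjS : S1 `&` S2 = set0.
Local Notation S := (S1 `|` S2).

Lemma disjS12 x : x \in S1 -> x \notin S2.
Proof.
move=> /set_mem x1; apply/negP => /set_mem x2.
by have : (S1 `&` S2) x by []; rewrite disjS.
Qed.

Lemma disjS21 x : x \in S2 -> x \notin S1.
Proof. by apply: contraTN; apply: disjS12. Qed.

Lemma coverS12 x : x \in S -> x \notin S1 -> x \in S2.
Proof. by rewrite in_setU => /orP[->|]. Qed.

Lemma coverS21 x : x \in S -> x \notin S2 -> x \in S1.
Proof. by rewrite in_setU => /orP[|->]. Qed.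

Lemma starts_fact phi : is_fact_on S phi -> phi != [::] ->
  starts S1 phi || starts S2 phi.
Proof.
case: phi => [//|[|c u] phi] /is_fact_on_cons[//= _ uS _] _.
by rewrite -in_setU uS ?mem_head.
Qed.

Definition fiber_starting (T : set L) (p1 p2 phi : fact) : Prop :=
  [/\ is_fact_on S phi, restr S1 phi = p1, restr S2 phi = p2 & starts T phi].

Definition shuffle1_spec (p1 p2 : fact) : Prop :=
  (forall phi, phi \in shuffle1 p1 p2 <-> fiber_starting S1 p1 p2 phi) /\
  uniq (shuffle1 p1 p2).

Definition shuffle2_spec (p1 p2 : fact) : Prop :=
  (forall phi, phi \in shuffle2 p1 p2 <-> fiber_starting S2 p1 p2 phi) /\
  uniq (shuffle2 p1 p2).

Definition shuffles_spec (p1 p2 : fact) : Prop :=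
  shuffle1_spec p1 p2 /\ shuffle2_spec p1 p2.

Lemma mem_shuffle_of (p1 p2 : fact) : shuffles_spec p1 p2 ->
  forall phi, phi \in shuffle p1 p2 <->
    [/\ is_fact_on S phi, restr S1 phi = p1 & restr S2 phi = p2].
Proof.
move=> [[mem1 _] [mem2 _]] phi; rewrite /shuffle.
case: ifP => [/andP[/nilP-> /nilP->]|p12].
  rewrite mem_seq1; split=> [/eqP-> | [phiS r1 r2]].
    by split=> //; split=> u; rewrite in_nil.
  apply: contraT => phi_neq0.
  by have /orP[/restr_starts|/restr_starts] := starts_fact phiS phi_neq0;
    rewrite ?r1 ?r2.
rewrite mem_cat; split=> [/orP[/mem1|/mem2] []//|[phiS r1 r2]].
have phi_neq0 : phi != [::] by apply: contraFneq p12 => phi0; rewrite -r1 -r2 phi0.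
have /orP[st|st] := starts_fact phiS phi_neq0.
  by apply/orP; left; apply/mem1.
by apply/orP; right; apply/mem2.
Qed.

Lemma uniq_shuffle_of (p1 p2 : fact) : shuffles_spec p1 p2 -> uniq (shuffle p1 p2).
Proof.
move=> [[mem1 u1] [mem2 u2]]; rewrite /shuffle; case: ifP => // _.
rewrite cat_uniq u1 u2 andbT /=; apply/hasPn => phi /mem2[_ _ _ st2].
apply/negP => /mem1[_ _ _]; case: phi st2 => [|[|c u] phi] //= /disjS21.
by move/negbTE->.
Qed.

Lemma shuffle1_spec_nil (p2 : fact) : shuffle1_spec [::] p2.
Proof.
rewrite /shuffle1_spec shuffle1_nil; split=> // phi; rewrite in_nil.
by split=> // -[_ r1 _ /restr_starts]; rewrite r1.
Qed.

Lemma shuffle2_spec_nil (p1 : fact) : shuffle2_spec p1 [::].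
Proof.
rewrite /shuffle2_spec shuffle2_nil; split=> // phi; rewrite in_nil.
by split=> // -[_ _ r2 /restr_starts]; rewrite r2.
Qed.

Lemma shuffle1_spec_cons a (p1 p2 : fact) : is_fact_on S1 (a :: p1) ->
  shuffles_spec p1 p2 -> shuffle1_spec (a :: p1) p2.
Proof.
move=> /is_fact_on_cons[a_neq0 aS1 _] spec; have [_ [mem2 u2]] := spec.
rewrite /shuffle1_spec shuffle1_cons; split.
  apply: (mem_shuffle_step disjS12 (@subsetUl _ S1 S2) coverS12 a_neq0 aS1) => phi.
    exact: mem_shuffle_of.
  exact: mem2.
by apply: (uniq_shuffle_step (T' := S2)) (uniq_shuffle_of spec) u2 => psi /mem2[].
Qed.

Lemma shuffle2_spec_cons (p1 : fact) b (p2 : fact) : is_fact_on S2 (b :: p2) ->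
  shuffles_spec p1 p2 -> shuffle2_spec p1 (b :: p2).
Proof.
move=> /is_fact_on_cons[b_neq0 bS2 _] spec; have [[mem1 u1] _] := spec.
rewrite /shuffle2_spec shuffle2_cons; split.
  move=> phi; rewrite (mem_shuffle_step disjS21 (@subsetUr _ S1 S2) coverS21 b_neq0 bS2
    (q := p2) (q' := p1)).
  - by split=> -[].
  - move=> phi'; rewrite (mem_shuffle_of spec).
    by split=> -[].
  - by move=> psi; rewrite mem1; split=> -[].
by apply: (uniq_shuffle_step (T' := S1)) (uniq_shuffle_of spec) u1 => psi /mem1[].
Qed.

Lemma is_fact_on_shuffles_spec (p1 p2 : fact) : is_fact_on S1 p1 -> is_fact_on S2 p2 ->
  shuffles_spec p1 p2.
Proof.
elim: p1 p2 => [|a p1 IH1] p2 f1; elim: p2 => [|b p2 IH2] f2.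
- exact: (conj (shuffle1_spec_nil _) (shuffle2_spec_nil _)).
- split; first exact: shuffle1_spec_nil.
  by apply: (shuffle2_spec_cons f2); apply: IH2; case/is_fact_on_cons: f2.
- split; last exact: shuffle2_spec_nil.
  by apply: (shuffle1_spec_cons f1); apply: IH1 => //; case/is_fact_on_cons: f1.
- split.
    by apply: (shuffle1_spec_cons f1); apply: IH1 => //; case/is_fact_on_cons: f1.
  by apply: (shuffle2_spec_cons f2); apply: IH2; case/is_fact_on_cons: f2.
Qed.

Lemma mem_shuffle (p1 p2 : fact) phi : is_fact_on S1 p1 -> is_fact_on S2 p2 ->
  phi \in shuffle p1 p2 <->
    [/\ is_fact_on S phi, restr S1 phi = p1 & restr S2 phi = p2].
Proof. by move=> f1 f2; apply/mem_shuffle_of/is_fact_on_shuffles_spec. Qed.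

Lemma uniq_shuffle (p1 p2 : fact) : is_fact_on S1 p1 -> is_fact_on S2 p2 ->
  uniq (shuffle p1 p2).
Proof. by move=> f1 f2; apply/uniq_shuffle_of/is_fact_on_shuffles_spec. Qed.

End Fiber.
End Restriction.

Lemma fsum_fsum_supp (R : nmodType) (I J : choiceType) (P P' : set I)
    (Q Q' : set J) (F : I -> J -> R) :
  P' `<=` P -> Q' `<=` Q ->
  (forall i j, P i -> Q j -> F i j != 0 -> P' i /\ Q' j) ->
  \sum_(i \in P) \sum_(j \in Q) F i j = \sum_(i \in P') \sum_(j \in Q') F i j.
Proof.
move=> subP subQ suppF.
have inner i : P i -> \sum_(j \in Q) F i j = \sum_(j \in Q') F i j.
  move=> Pi; apply/esym/fsbig_widen => // j [Qj Q'j] /=.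
  by apply: contra_notP Q'j => /eqP /(suppF i j Pi Qj) [].
rewrite (eq_fsbigr (fun i => \sum_(j \in Q') F i j)); last by move=> i /set_mem /inner.
apply/esym/fsbig_widen => // i [Pi P'i] /=; apply: fsbig1 => j Q'j.
by apply: contra_notP P'i => /eqP /(suppF i j Pi (subQ j Q'j)) [].
Qed.

Lemma exchange_fsbig_supp (R : nmodType) (I J : choiceType) (P P' : set I)
    (Q Q' : set J) (F : I -> J -> R) :
  finite_set P' -> finite_set Q' -> P' `<=` P -> Q' `<=` Q ->
  (forall i j, P i -> Q j -> F i j != 0 -> P' i /\ Q' j) ->
  \sum_(i \in P) \sum_(j \in Q) F i j = \sum_(j \in Q) \sum_(i \in P) F i j.
Proof.
move=> finP' finQ' subP subQ suppF.
rewrite (fsum_fsum_supp subP subQ suppF) exchange_fsbig //.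
symmetry; apply: fsum_fsum_supp => // j i Qj Pi /(suppF i j Pi Qj) [].
by split.
Qed.

Lemma fsum_mul (R : idomainType) (I J : choiceType) (P : set I) (Q : set J)
    (f : I -> R) (g : J -> R) :
  finite_set (P `&` [set i | f i != 0]) -> finite_set (Q `&` [set j | g j != 0]) ->
  (\sum_(i \in P) f i) * (\sum_(j \in Q) g j) = \sum_(p \in P `*` Q) f p.1 * g p.2.
Proof.
move=> finP finQ; rewrite mulr_fsuml; under eq_fsbigr do rewrite mulr_fsumr.
rewrite (fsum_fsum_supp (P' := P `&` [set i | f i != 0])
  (Q' := Q `&` [set j | g j != 0])) ?pair_fsbig //; last first.
  by move=> i j Pi Qj; rewrite mulf_eq0 negb_or => /andP[fi gj].
apply/fsbig_widen => [[i j] [[Pi _] [Qj _]] //|[i j] [[Pi Qj] supp] /=].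
by apply/eqP; apply: contra_notT supp; rewrite mulf_eq0 negb_or => /andP[].
Qed.

Lemma fsum_fibers (R : nmodType) (I J : choiceType) (A : set I) (B : set J)
    (h : I -> J) (F : I -> R) :
  finite_set (A `&` [set i | F i != 0]) -> (forall i, A i -> B (h i)) ->
  \sum_(i \in A) F i = \sum_(b \in B) \sum_(i \in A `&` h @^-1` [set b]) F i.
Proof.
move=> finF hAB; under [RHS]eq_fsbigr do rewrite fsbig_mkcondr.
pose Z := A `&` [set i | F i != 0].
have subZ : h @` Z `<=` B by move=> _ [i [Ai _] <-]; apply: hAB.
have suppZ b i : B b -> A i -> (if i \in h @^-1` [set b] then F i else 0) != 0 ->
    (h @` Z) b /\ Z i.
  by case: ifPn => [/set_mem hib Fi|_]; [split; [exists i|] | rewrite eqxx].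
rewrite (exchange_fsbig_supp (finite_image h finF) finF subZ (@subIsetl _ _ _) suppZ).
apply: eq_fsbigr => i /set_mem Ai; rewrite -(fsbig_widen [set h i]) //.
- by rewrite fsbig_set1 ifT //; apply/mem_set.
- by move=> _ ->; apply: hAB.
move=> b [_ /= hib]; rewrite ifF //.
by apply/negbTE/negP => /set_mem hb; apply: hib (esym hb).
Qed.

Lemma finite_submset (K : choiceType) (m : multiset K) :
  finite_set [set a : multiset K | forall x, (a x <= m x)%N].
Proof.
pose g (f : {ffun finsupp m -> 'I_(size (enum_mset m)).+1}) : multiset K :=
  [fsfun x : finsupp m => nat_of_ord (f x)].
apply: (sub_finite_set _ (finite_image g (@finite_finset _ setT))) => a le_am.
exists [ffun x : finsupp m => inord (a (val x))] => //.
apply/msetP => y; rewrite fsfun_ffun; case: insubP => [u _ <-|ym] /=.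
  rewrite ffunE inordK // ltnS (leq_trans (le_am _)) //.
  by rewrite -count_mem_mset count_size.
have my0 : m y = 0%N by apply/eqP; rewrite mset_eq0 -msuppE.
by have := le_am y; rewrite my0 leqn0 => /eqP.
Qed.

Lemma finite_msetD_eq (K : choiceType) (m : multiset K) :
  finite_set [set ab : multiset K * multiset K | msetD ab.1 ab.2 = m].
Proof.
apply: (sub_finite_set _ (finite_setX (finite_submset m) (finite_submset m))).
by move=> [a b] /= <-; split=> x /=; rewrite msetE2 ?leq_addr ?leq_addl.
Qed.

Lemma smul_fsum (R : realType) (f g : nat -> mono -> R) j m :
  smul f g j m = \sum_(k \in `I_j.+1 `*` [set ab : mono * mono | msetD ab.1 ab.2 = m])
                    f k.1 k.2.1 * g (j - k.1)%N k.2.2.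
Proof.
rewrite /smul (fsbig_ord _ _ (fun i => \sum_(ab \in _) f i ab.1 * g (j - i)%N ab.2)).
by rewrite pair_fsbig //; apply: finite_msetD_eq.
Qed.

Lemma smul_fsum_fsum (R : realType) (I J : choiceType) (P : set I) (Q : set J)
    (f : I -> nat -> mono -> R) (g : J -> nat -> mono -> R) j m :
  (forall i a, finite_set (P `&` [set x | f x i a != 0])) ->
  (forall i b, finite_set (Q `&` [set y | g y i b != 0])) ->
  smul (fun i a => \sum_(x \in P) f x i a) (fun i b => \sum_(y \in Q) g y i b) j m =
  \sum_(p \in P `*` Q) smul (f p.1) (g p.2) j m.
Proof.
move=> finf fing; rewrite smul_fsum; under eq_fsbigr do rewrite fsum_mul //.
set K := (X in \sum_(_ \in X) _).
have finK : finite_set K.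
  by apply: finite_setX; [exact: finite_II | exact: finite_msetD_eq].
pose Z1 := \bigcup_(k in K) (P `&` [set x | f x k.1 k.2.1 != 0]).
pose Z2 := \bigcup_(k in K) (Q `&` [set y | g y (j - k.1)%N k.2.2 != 0]).
rewrite (exchange_fsbig_supp (P' := K) (Q' := Z1 `*` Z2)) //.
- by apply: eq_fsbigr => p _; rewrite smul_fsum.
- by apply: finite_setX; apply: bigcup_finite.
- by move=> [x y] [[k _ [Px _]] [k' _ [Qy _]]].
move=> k [x y] Kk [/= Px Qy]; rewrite mulf_eq0 negb_or => /andP[fx gy].
by split=> //; split; exists k.
Qed.

Lemma smul_lag_term (R : realType) (L : choiceType) (w : seq (seq L) -> mono -> R)
    (phi1 phi2 : seq (seq L)) j m :
  smul (lag_term w phi1) (lag_term w phi2) j m =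
  xmul (w phi1) (w phi2) m * (laguerre R (parts phi1) * laguerre R (parts phi2))`_j.
Proof.
have finD := finite_msetD_eq m.
rewrite /smul; under eq_bigr do rewrite (fsbig_finite _ _ finD).
rewrite exchange_big /xmul (fsbig_finite _ _ finD) coefM big_distrl /=.
apply: eq_bigr => ab _; rewrite big_distrr.
by apply: eq_bigr => i _; rewrite /lag_term mulrACA.
Qed.

Section Product.
Variables (R : realType) (L : choiceType) (S1 S2 : set L).
Variables (A1 A2 : set (seq (seq L))) (w : seq (seq L) -> mono -> R).
Hypothesis disjS : S1 `&` S2 = set0.
Hypotheses (A1S1 : forall phi, A1 phi -> is_fact_on S1 phi)
  (A2S2 : forall phi, A2 phi -> is_fact_on S2 phi).
Local Notation A := (fstar S1 S2 A1 A2).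

Lemma fstar_weightE phi : is_weight (S1 `|` S2) A w -> A phi ->
  w phi = xmul (w (restr S1 phi)) (w (restr S2 phi)).
Proof.
move=> wA Aphi; have [_ /(_ S1 (@subsetUl _ _ _))[_ _ ->]] := wA phi Aphi.
by rewrite setUKD // disjS.
Qed.

Lemma fstar_fiber (p1 p2 : seq (seq L)) : A1 p1 -> A2 p2 ->
  A `&` (fun phi => (restr S1 phi, restr S2 phi)) @^-1` [set (p1, p2)] =
  [set` shuffle p1 p2].
Proof.
move=> A1p1 A2p2; have memP := mem_shuffle disjS _ (A1S1 A1p1) (A2S2 A2p2).
apply/seteqP; split=> phi /=; first by move=> [[phiS _] [r1 r2]]; apply/memP.
by move=> /memP[phiS r1 r2]; rewrite /fstar /= r1 r2.
Qed.

Lemma fstar_fiber_sum (p1 p2 : seq (seq L)) j m :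
  is_weight (S1 `|` S2) A w -> A1 p1 -> A2 p2 ->
  \sum_(phi \in A `&` (fun phi => (restr S1 phi, restr S2 phi)) @^-1` [set (p1, p2)])
     lag_term w phi j m =
  smul (lag_term w p1) (lag_term w p2) j m.
Proof.
move=> wA A1p1 A2p2; have memP := mem_shuffle disjS _ (A1S1 A1p1) (A2S2 A2p2).
rewrite fstar_fiber // -fsbig_seq; last first.
  exact: (uniq_shuffle disjS (A1S1 A1p1) (A2S2 A2p2)).
rewrite smul_lag_term -laguerre_sum_shuffle /laguerre_sum coef_sum mulr_sumr.
rewrite big_seq [RHS]big_seq; apply: eq_bigr => phi /memP[phiS r1 r2].
have Aphi : A phi by rewrite /fstar /= r1 r2.
by rewrite /lag_term (fstar_weightE wA Aphi) r1 r2.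
Qed.

End Product.

Theorem theorem2p7 (R : realType) (L : choiceType) (S1 S2 : set L)
    (A1 A2 : set (seq (seq L))) (w : seq (seq L) -> mono -> R) :
  S1 `&` S2 = set0 ->
  (forall phi, A1 phi -> is_fact_on S1 phi) ->
  (forall phi, A2 phi -> is_fact_on S2 phi) ->
  is_weight (S1 `|` S2) (fstar S1 S2 A1 A2) w ->
  is_weight S1 A1 w ->
  is_weight S2 A2 w ->
  lag_wd (fstar S1 S2 A1 A2) w ->
  lag_wd A1 w ->
  lag_wd A2 w ->
  lag_series (fstar S1 S2 A1 A2) w = smul (lag_series A1 w) (lag_series A2 w).
Proof.
move=> disjS A1S1 A2S2 wA _ _ wdA wd1 wd2; apply/funext => j; apply/funext => m.
rewrite /lag_series smul_fsum_fsum //.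
rewrite (fsum_fibers (B := A1 `*` A2) (h := fun phi => (restr S1 phi, restr S2 phi)))
  ?wdA //; last by move=> phi [_ []].
by apply: eq_fsbigr => -[p1 p2] /set_mem[A1p1 A2p2]; apply: fstar_fiber_sum.
Qed.
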